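(* Let $n\ge 4$ and $1\le k<\frac{n}{2}$ be integers. If $n\neq 2k+1$, then $\mathrm{Aut}(B(n,k))=\{f_\sigma:\sigma\in \mathrm{Sym}([n])\}\cong \mathrm{Sym}([n])$. If $n=2k+1$, then $\mathrm{Aut}(B(n,k))=\{f_\sigma\alpha^i:\sigma\in\mathrm{Sym}([n]),\ i\in\{0,1\}\}\cong \mathrm{Sym}([n])\times\mathbb{Z}_2$, where $\mathbb{Z}_2$ is the cyclic group of order $2$.
   Context: For integers $n\ge 4$ and $1\le k<\frac n2$, let $[n]=\{1,\dots,n\}$. The graph $B(n,k)$ has vertex set $V=\{v\subset[n] : |v|\in\{k,k+1\}\}$, and two vertices $v,w$ are adjacent iff $v\subset w$ or $w\subset v$. For $\sigma\in\mathrm{Sym}([n])$, $f_\sigma:V\to V$ is $f_\sigma(v)=\{\sigma(x):x\in v\}$. When $n=2k+1$, $\alpha:V\to V$ is the complementation map $\alpha(v)=[n]\setminus v$. *)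

From HB Require Import structures.
From mathcomp Require Import all_boot all_order all_fingroup.
Set Implicit Arguments. Unset Strict Implicit. Unset Printing Implicit Defensive.

(* [n] is modelled by 'I_n; subsets of [n] are {set 'I_n}. *)
Definition Bpred (n k : nat) (A : {set 'I_n}) : bool := (#|A| == k) || (#|A| == k.+1).

Definition Bvert (n k : nat) := {A : {set 'I_n} | Bpred k A}.

Definition badj n k (v w : Bvert n k) : bool :=
  (val v \proper val w) || (val w \proper val v).

Definition Baut (n k : nat) : {set {perm Bvert n k}} :=
  [set p : {perm Bvert n k} | [forall v, forall w, badj (p v) (p w) == badj v w]].

Lemma fsig_proof n k (s : {perm 'I_n}) (v : Bvert n k) : Bpred k (s @: val v).
Proof. by rewrite /Bpred card_imset; [exact: valP v | exact: perm_inj]. Qed.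

Definition fsig_fun n k (s : {perm 'I_n}) (v : Bvert n k) : Bvert n k :=
  exist _ (s @: val v) (fsig_proof s v).

Lemma fsig_inj n k (s : {perm 'I_n}) : injective (@fsig_fun n k s).
Proof.
move=> u v /(congr1 val) /= H; apply: val_inj.
exact: (imset_inj (@perm_inj _ s)).
Qed.

Definition Fsig n k (s : {perm 'I_n}) : {perm Bvert n k} := perm (@fsig_inj n k s).

Lemma FsigE n k (s : {perm 'I_n}) (v : Bvert n k) : val (Fsig k s v) = s @: val v.
Proof. by rewrite /Fsig permE. Qed.

(* It is only used when n = 2k+1, where
   complements of vertices are vertices; to have a total permutation for all
   n, k we leave v fixed when its complement is not a vertex. *)
Definition alpha_fun n k (v : Bvert n k) : Bvert n k := insubd v (~: val v).

Lemma alpha_inv n k : involutive (@alpha_fun n k).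
Proof.
move=> v; rewrite /alpha_fun.
have [Pc|nPc] := boolP (Bpred k (~: val v)).
  apply: val_inj; rewrite (insubdK _ Pc) setCK insubdK //; exact: valP v.
by rewrite /insubd insubN /= ?insubN.
Qed.

Definition Balpha n k : {perm Bvert n k} := perm (can_inj (@alpha_inv n k)).

Lemma BalphaE n k (v : Bvert n k) :
  n = k.*2.+1 -> val (Balpha n k v) = ~: val v.
Proof.
move=> hn; rewrite /Balpha permE /alpha_fun insubdK //.
have hc : #|~: val v| = k.*2.+1 - #|val v|.
  have h1 : #|~: val v| = n - #|val v|.
    apply/eqP; rewrite -(eqn_add2l #|val v|) cardsC card_ord subnKC //.
    by have := max_card (mem (val v)); rewrite card_ord.
  exact: etrans h1 (congr1 (fun m => m - #|val v|) hn).
change (Bpred k (~: val v)); rewrite /Bpred hc; case/orP: (valP v) => /eqP ->.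
  by rewrite -addnn -addnS addKn eqxx orbT.
by rewrite -addnn -addSn addKn eqxx.
Qed.

From HB Require Import structures.
From mathcomp Require Import all_boot all_order all_fingroup all_algebra.
From mathcomp Require Import zify.
Set Implicit Arguments. Unset Strict Implicit. Unset Printing Implicit Defensive.

(* The vertices of B(n,k) lie on two levels, the k-sets and the (k+1)-sets,
   and every edge joins the two levels.  A k-set has degree n-k and a
   (k+1)-set degree k+1, so for n <> 2k+1 every automorphism preserves the
   levels.  For n = 2k+1 the graph is connected, so an automorphism either
   preserves both levels or swaps them, and in the second case composing it
   with alpha makes it level preserving.

   A level-preserving automorphism is a bijection on two consecutive levels of
   the Boolean lattice of [n] that preserves and reflects inclusion.  Sending an
   m-set C to the intersection of the images of its (m+1)-supersets turns such
   a map on levels m+1, m+2 into one on levels m, m+1 with the same properties;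
   going down to the singletons, where the map is a permutation of [n], one
   finds that this permutation induces it on every level. *)

Section SetCombinatorics.
Variable T : finType.
Implicit Types (A B E S X : {set T}).

Lemma setU1_of_card_succ A E : #|A| = #|E|.+1 -> E \subset A ->
  exists2 c, c \notin E & A = c |: E.
Proof.
move=> cardA sEA; have /cards1P[c AE] : #|A :\: E| == 1.
  by rewrite cardsD (setIidPr sEA) cardA subSnn.
have : c \in A :\: E by rewrite AE set11.
rewrite inE => /andP[cNE cA]; exists c => //.
apply/setP=> x; rewrite !inE; have [xE|xNE] := boolP (x \in E).
  by rewrite orbT (subsetP sEA).
by move/setP/(_ x): AE; rewrite !inE xNE orbF /= => <-.
Qed.

Lemma card_supsets_succ E :
  #|[set A : {set T} | (#|A| == #|E|.+1) && (E \subset A)]| = #|T| - #|E|.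
Proof.
have -> : [set A : {set T} | (#|A| == #|E|.+1) && (E \subset A)] = [set x |: E | x in ~: E].
  apply/setP=> A; rewrite inE; apply/andP/imsetP => [[/eqP cardA sEA]|[c]].
    by have [c cNE ->] := setU1_of_card_succ cardA sEA; exists c; rewrite ?inE.
  by rewrite inE => cNE ->; rewrite cardsU1 cNE subsetUr.
rewrite card_in_imset -?(cardsC E) ?addKn // => x y; rewrite !inE => xNE yNE exy.
by move: (setU11 x E); rewrite exy !inE (negbTE xNE) orbF => /eqP.
Qed.

Lemma card_subsets_pred E m : #|E| = m.+1 ->
  #|[set A : {set T} | (#|A| == m) && (A \subset E)]| = m.+1.
Proof.
move=> cardE.
have -> : [set A : {set T} | (#|A| == m) && (A \subset E)] = [set E :\ x | x in E].
  apply/setP=> A; rewrite inE; apply/andP/imsetP => [[/eqP cardA sAE]|[x xE ->]].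
    have [|c cNA ->] := setU1_of_card_succ _ sAE; first by rewrite cardA.
    by exists c; rewrite ?setU1K ?setU11.
  by split; [move: (cardsD1 x E); rewrite xE cardE => -[->] | exact: subD1set].
rewrite card_in_imset ?cardE // => x y xE yE exy.
have : x \notin E :\ y by rewrite -exy setD11.
by rewrite !inE xE andbT negbK => /eqP.
Qed.

Lemma setU_distinct_subsets X A1 A2 m :
  A1 \subset X -> A2 \subset X -> #|A1| = m -> #|A2| = m -> #|X| = m.+1 ->
  A1 != A2 -> A1 :|: A2 = X.
Proof.
move=> sA1X sA2X cardA1 cardA2 cardX neqA.
apply/eqP; rewrite eqEcard subUset sA1X sA2X cardX -cardA1 /=.
apply/proper_card; rewrite properEneq subsetUl andbT.
apply: contraNneq neqA => /esym/setUidPl sA2A1.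
by rewrite eq_sym eqEcard sA2A1 cardA1 cardA2 /=.
Qed.

Lemma exists_subset_card S m : m <= #|S| -> exists2 A : {set T}, A \subset S & #|A| = m.
Proof.
case/card_geqP=> s [uniq_s size_s sS]; exists [set x in s].
  by apply/subsetP=> x; rewrite inE => /sS.
by rewrite cardsE (card_uniqP uniq_s).
Qed.

Lemma exists_card_mem_notin x y m : x != y -> 0 < m < #|T| ->
  exists A, [/\ x \in A, y \notin A & #|A| = m].
Proof.
move=> neq_xy /andP[m_gt0 m_lt].
have [|A' sA' cardA'] := @exists_subset_card (~: [set x; y]) m.-1.
  by rewrite cardsCs setCK cards2 neq_xy; lia.
have [xNA' yNA'] : x \notin A' /\ y \notin A'.
  by split; apply/negP=> /(subsetP sA'); rewrite !inE eqxx ?orbT.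
exists (x |: A'); rewrite cardsU1 xNA' cardA' !inE eqxx eq_sym (negbTE neq_xy).
by split=> //; lia.
Qed.

Lemma imset_permK (s : {perm T}) A : s^-1%g @: (s @: A) = A.
Proof. by rewrite -imset_comp (eq_imset _ (permK s)) imset_id. Qed.

Lemma imset_perm_proper (s : {perm T}) A B : (s @: A \proper s @: B) = (A \proper B).
Proof.
have inj_imset (t : {perm T}) A' B' : A' \proper B' -> t @: A' \proper t @: B'.
  by apply: imset_proper => x y _ _; apply: perm_inj.
by apply/idP/idP => [/(inj_imset s^-1%g)|/(inj_imset s)]; rewrite ?imset_permK.
Qed.

Lemma imset_permC (s : {perm T}) A : s @: (~: A) = ~: (s @: A).
Proof. by rewrite !(can2_imset_pre _ (permK s) (permKV s)) preimsetC. Qed.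

End SetCombinatorics.

Section LevelIsomorphisms.
Variable T : finType.
Implicit Types (A B C : {set T}) (a b c : T).

Definition in_levels m l : Prop := l = m \/ l = m.+1.

Definition levels_iso m (g : {set T} -> {set T}) :=
  [/\ forall A, in_levels m #|A| -> #|g A| = #|A|,
      forall A B, #|A| = #|B| -> in_levels m #|A| -> g A = g B -> A = B
    & forall A B, #|A| = m -> #|B| = m.+1 -> (g A \subset g B) = (A \subset B)].

Lemma levels_iso0_perm g : levels_iso 0 g ->
  exists s : {perm T}, forall A, in_levels 0 #|A| -> g A = s @: A.
Proof.
case=> g_card g_inj _; pose f x := odflt x [pick y in g [set x]].
have g1 x : g [set x] = [set f x].
  have /cards1P[y gx] : #|g [set x]| == 1 by rewrite g_card cards1 //; right.
  by rewrite /f gx; case: pickP => [z /set1P ->|/(_ y)]; rewrite ?set11.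
have f_inj : injective f.
  by move=> x y fxy; apply/set1_inj/g_inj; rewrite ?cards1 ?g1 ?fxy //; right.
exists (perm f_inj) => A [/eqP|/eqP/cards1P[x ->]]; last by rewrite imset_set1 permE g1.
rewrite cards_eq0 => /eqP ->; rewrite imset0.
by apply/eqP; rewrite -cards_eq0 g_card ?cards0 //; left.
Qed.

Section Descent.
Variables (m : nat) (g : {set T} -> {set T}).
Hypotheses (g_card : forall A, in_levels m.+1 #|A| -> #|g A| = #|A|)
  (g_inj : forall A B, #|A| = #|B| -> in_levels m.+1 #|A| -> g A = g B -> A = B)
  (g_sub : forall A B, #|A| = m.+1 -> #|B| = m.+2 -> (g A \subset g B) = (A \subset B))
  (m_lt : m.+1 < #|T|).

Lemma card_setU1 C a : #|C| = m -> a \notin C -> #|a |: C| = m.+1.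
Proof. by move=> cardC aNC; rewrite cardsU1 aNC cardC. Qed.

Lemma card_setU1_pair C a b : #|C| = m -> a \notin C -> b \notin C -> a != b ->
  #|a |: (b |: C)| = m.+2.
Proof.
by move=> cardC aNC bNC neq_ab; rewrite cardsU1 card_setU1 // !inE negb_or neq_ab aNC.
Qed.

Lemma image_setU1_pair C a b : #|C| = m -> a \notin C -> b \notin C -> a != b ->
  g (a |: (b |: C)) = g (a |: C) :|: g (b |: C) /\ #|g (a |: C) :&: g (b |: C)| = m.
Proof.
move=> cardC aNC bNC neq_ab.
have [cardaC cardbC] := (card_setU1 cardC aNC, card_setU1 cardC bNC).
have cardabC := card_setU1_pair cardC aNC bNC neq_ab.
have gU : g (a |: C) :|: g (b |: C) = g (a |: (b |: C)).
  apply: (setU_distinct_subsets (m := m.+1));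
    rewrite ?g_card ?cardaC ?cardbC ?cardabC //; try by [left | right].
  - by rewrite g_sub // setUCA subsetUr.
  - by rewrite g_sub // subsetUr.
  apply: contra_neq neq_ab => /g_inj; rewrite cardaC cardbC => /(_ erefl).
  move=> /(_ (or_introl erefl)) /setP/(_ a); rewrite !inE eqxx /= => /esym.
  by rewrite (negbTE aNC) orbF => /eqP.
split=> //; have := cardsUI (g (a |: C)) (g (b |: C)).
rewrite gU !g_card ?cardaC ?cardbC ?cardabC; try by [left | right].
by move/eqP; rewrite !addSn addnS !eqSS eqn_add2l => /eqP.
Qed.

Lemma image_setU1_setI_sub C a b c :
  #|C| = m -> a \notin C -> b \notin C -> c \notin C -> a != b ->
  g (a |: C) :&: g (b |: C) \subset g (c |: C).
Proof.
move=> cardC aNC bNC cNC neq_ab.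
have [->|neq_ca] := eqVneq c a; first exact: subsetIl.
have [->|neq_cb] := eqVneq c b; first exact: subsetIr.
set X := g (a |: C); set Y := g (b |: C); set Z := g (c |: C).
have [gab XY] := image_setU1_pair cardC aNC bNC neq_ab.
have [_ ZX] := image_setU1_pair cardC cNC aNC neq_ca.
have [_ ZY] := image_setU1_pair cardC cNC bNC neq_cb.
have cardZ : #|Z| = m.+1 by rewrite g_card card_setU1 //; left.
(* Otherwise Z :&: X and Z :&: Y are distinct m-subsets of Z, so Z lies in
   X :|: Y = g (a |: (b |: C)), forcing c |: C \subset a |: (b |: C). *)
apply: contraT => nsXYZ.
have neqZ : Z :&: X != Z :&: Y.
  apply: contra nsXYZ => /eqP eZ.
  have sZXY : Z :&: X \subset X :&: Y by rewrite subsetI subsetIr eZ subsetIr.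
  have /eqP <- : Z :&: X == X :&: Y by rewrite eqEcard sZXY XY ZX leqnn.
  exact: subsetIl.
have : Z \subset X :|: Y.
  rewrite -(setU_distinct_subsets (subsetIl Z X) (subsetIl Z Y) ZX ZY cardZ neqZ).
  by rewrite -setIUr subsetIr.
rewrite -gab g_sub ?card_setU1_pair ?card_setU1 // => /subsetP/(_ c (setU11 c C)).
by rewrite !inE (negbTE neq_ca) (negbTE neq_cb) (negbTE cNC).
Qed.

Definition lower_image C := \bigcap_(A : {set T} | (#|A| == m.+1) && (C \subset A)) g A.

Lemma lower_imageE C a b : #|C| = m -> a \notin C -> b \notin C -> a != b ->
  lower_image C = g (a |: C) :&: g (b |: C).
Proof.
move=> cardC aNC bNC neq_ab; apply/eqP; rewrite eqEsubset; apply/andP; split.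
  by rewrite subsetI !bigcap_inf // card_setU1 ?eqxx ?subsetUr.
apply/bigcapsP=> A /andP[/eqP cardA sCA].
have [|c cNC ->] := setU1_of_card_succ _ sCA; first by rewrite cardA cardC.
exact: image_setU1_setI_sub.
Qed.

Lemma exists_two_notin C : #|C| = m -> exists a b, [/\ a \notin C, b \notin C & a != b].
Proof.
move=> cardC; have : 1 < #|~: C| by rewrite cardsCs setCK cardC; lia.
by case/card_gt1P=> a [b [aC bC neq_ab]]; exists a, b; rewrite -!in_setC.
Qed.

Lemma card_lower_image C : #|C| = m -> #|lower_image C| = m.
Proof.
move=> cardC; have [a [b [aNC bNC neq_ab]]] := exists_two_notin cardC.
rewrite (lower_imageE cardC aNC bNC neq_ab).
by case: (image_setU1_pair cardC aNC bNC neq_ab).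
Qed.

Lemma lower_image_sub C A : #|C| = m -> #|A| = m.+1 ->
  (lower_image C \subset g A) = (C \subset A).
Proof.
move=> cardC cardA; apply/idP/idP => [sLgA|sCA]; last by rewrite bigcap_inf ?cardA ?eqxx.
have cardS := card_supsets_succ C; have cardSL := card_supsets_succ (lower_image C).
rewrite cardC in cardS; rewrite card_lower_image // in cardSL.
set S := [set B : {set T} | _] in cardS; set SL := [set B : {set T} | _] in cardSL.
have gS : g @: S = SL.
  apply/eqP; rewrite eqEcard; apply/andP; split.
    apply/subsetP=> y /imsetP[B]; rewrite !inE => /andP[/eqP cardB sCB] ->.
    rewrite g_card ?cardB ?eqxx /=; last by left.
    by rewrite bigcap_inf // cardB eqxx.
  rewrite card_in_imset ?cardS ?cardSL // => B1 B2; rewrite !inE.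
  move=> /andP[/eqP cardB1 _] /andP[/eqP cardB2 _]; apply: g_inj; rewrite ?cardB1 ?cardB2 //.
  by left.
have : g A \in g @: S by rewrite gS inE g_card cardA ?eqxx //; left.
case/imsetP=> B; rewrite inE => /andP[/eqP cardB sCB] /g_inj -> //; last by left.
by rewrite cardA cardB.
Qed.

Definition descend A := if #|A| == m then lower_image A else g A.

Lemma descend_levels_iso : levels_iso m descend.
Proof.
have neq_m : (m.+1 == m) = false by rewrite gtn_eqF.
rewrite /descend; split.
- move=> A [] cardA; rewrite cardA ?eqxx ?neq_m; first exact: card_lower_image.
  by rewrite g_card ?cardA //; left.
- move=> A B eqAB [] cardA; rewrite -eqAB cardA ?eqxx ?neq_m => eq_image; last first.
    by apply: g_inj; rewrite -?eqAB ?cardA //; left.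
  have cardB : #|B| = m by rewrite -eqAB.
  have [a [b [aNA bNA neq_ab]]] := exists_two_notin cardA.
  have sB x : x \notin A -> B \subset x |: A.
    move=> xNA; rewrite -(lower_image_sub cardB (card_setU1 cardA xNA)) -eq_image.
    by rewrite lower_image_sub ?card_setU1 ?subsetUr.
  apply/esym/eqP; rewrite eqEcard cardA cardB leqnn andbT; apply/subsetP=> x xB.
  move: (subsetP (sB a aNA) x xB) (subsetP (sB b bNA) x xB); rewrite !inE.
  case: (x \in A); rewrite ?orbT ?orbF // => /eqP-> /eqP eq_ab.
  by rewrite eq_ab eqxx in neq_ab.
- by move=> A B cardA cardB; rewrite cardA cardB eqxx neq_m lower_image_sub.
Qed.

Lemma levels_iso_extend (s : {perm T}) :
  (forall A, #|A| = m.+1 -> g A = s @: A) -> forall A, #|A| = m.+2 -> g A = s @: A.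
Proof.
move=> g_s A cardA; apply/esym/eqP.
rewrite eqEcard card_imset ?g_card ?cardA ?leqnn ?andbT; last exact: perm_inj; last by right.
apply/subsetP=> _ /imsetP[x xA ->].
have /card_gt0P[z] : 0 < #|A :\ x| by move: (cardsD1 x A); rewrite xA cardA add1n => -[<-].
rewrite !inE => /andP[neq_zx zA].
have cardAz : #|A :\ z| = m.+1 by move: (cardsD1 z A); rewrite zA cardA add1n => -[].
have : g (A :\ z) \subset g A by rewrite g_sub ?subD1set.
by rewrite g_s // => /subsetP; apply; rewrite imset_f // !inE eq_sym neq_zx.
Qed.

End Descent.

Theorem levels_iso_perm m g : m < #|T| -> levels_iso m g ->
  exists s : {perm T}, forall A, in_levels m #|A| -> g A = s @: A.
Proof.
elim: m g => [|m IH] g m_lt g_iso; first exact: levels_iso0_perm.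
have [g_card g_inj g_sub] := g_iso.
have [s descend_s] := IH _ (ltnW m_lt) (descend_levels_iso g_card g_inj g_sub m_lt).
have g_s A : #|A| = m.+1 -> g A = s @: A.
  by move=> cardA; rewrite -descend_s /descend cardA ?gtn_eqF //; right.
by exists s => A [/g_s|/(levels_iso_extend g_card g_sub g_s)].
Qed.

End LevelIsomorphisms.

Section LevelGraph.
Local Open Scope group_scope.
Variables n k : nat.
Local Notation V := (Bvert n k).
Implicit Types (u v w : V) (p : {perm V}).

Lemma card_Bvert v : in_levels k #|val v|.
Proof. by case/orP: (valP v) => /eqP ->; [left | right]. Qed.

Lemma Bvert_of_card (A : {set 'I_n}) : in_levels k #|A| -> exists v : V, A = val v.
Proof.
move=> cardA; have A_vert : Bpred k A by rewrite /Bpred; case: cardA => ->; rewrite eqxx ?orbT.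
by exists (exist _ A A_vert).
Qed.

Lemma BautP p : reflect (forall v w, badj (p v) (p w) = badj v w) (p \in Baut n k).
Proof.
rewrite inE; apply: (iffP forallP) => [p_adj v w|p_adj v].
  by apply/eqP; move/forallP: (p_adj v).
by apply/forallP=> w; rewrite p_adj.
Qed.

Lemma Baut1 : 1 \in Baut n k.
Proof. by apply/BautP=> v w; rewrite !perm1. Qed.

Lemma BautM p q : p \in Baut n k -> q \in Baut n k -> p * q \in Baut n k.
Proof. by move=> /BautP p_adj /BautP q_adj; apply/BautP=> v w; rewrite !permM q_adj p_adj. Qed.

Lemma badjC v w : badj v w = badj w v.
Proof. by rewrite /badj orbC. Qed.

Lemma badjE v w : #|val v| = k -> #|val w| = k.+1 -> badj v w = (val v \subset val w).
Proof.
move=> cardv cardw; rewrite /badj properEneq.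
have -> : val w \proper val v = false by apply/negP=> /proper_card; rewrite cardv cardw; lia.
have [eq_vw|_] := eqVneq (val v) (val w); last by rewrite orbF.
by move: cardv; rewrite eq_vw cardw; lia.
Qed.

Lemma badj_card_neq v w : badj v w -> #|val v| != #|val w|.
Proof. by case/orP=> /proper_card; lia. Qed.

Lemma Fsig_Baut (s : {perm 'I_n}) : Fsig k s \in Baut n k.
Proof. by apply/BautP=> v w; rewrite /badj !FsigE !imset_perm_proper. Qed.

Lemma FsigM (s t : {perm 'I_n}) : Fsig k (s * t) = Fsig k s * Fsig k t.
Proof.
apply/permP=> v; apply: val_inj; rewrite permM !FsigE -imset_comp.
by apply: eq_imset => x; rewrite /= permM.
Qed.

Lemma card_preserving_Baut_Fsig p : k < n -> p \in Baut n k ->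
  (forall v, #|val (p v)| = #|val v|) -> exists s, p = Fsig k s.
Proof.
move=> k_lt_n /BautP p_adj p_card.
pose g A := if insub A is Some v then val (p v) else A.
have gE v : g (val v) = val (p v) by rewrite /g valK.
have g_iso : levels_iso k g.
  split=> [A /Bvert_of_card[v ->]|A B eq_card levA|A B cardA cardB].
  - by rewrite gE p_card.
  - have [v ->] := Bvert_of_card levA; rewrite eq_card in levA.
    have [w ->] := Bvert_of_card levA.
    by rewrite !gE => /val_inj/perm_inj ->.
  - have [v eA] := Bvert_of_card (or_introl cardA : in_levels k #|A|).
    have [w eB] := Bvert_of_card (or_intror cardB : in_levels k #|B|).
    subst A B; by rewrite !gE -(badjE cardA cardB) -p_adj badjE ?p_card.
have [|s g_s] := levels_iso_perm _ g_iso; first by rewrite card_ord.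
by exists s; apply/permP=> v; apply: val_inj; rewrite FsigE -gE g_s //; apply: card_Bvert.
Qed.

Definition deg v := #|[set w | badj v w]|.

Lemma deg_Baut p v : p \in Baut n k -> deg (p v) = deg v.
Proof.
move=> /BautP p_adj; rewrite /deg -(card_imset [set w | badj v w] (@perm_inj _ p)).
congr #|pred_of_set _|; apply/setP=> w.
rewrite -{2}(permKV p w) mem_imset ?inE; last exact: perm_inj.
by rewrite -(p_adj v) permKV.
Qed.

Lemma deg_card_k v : #|val v| = k -> deg v = n - k.
Proof.
move=> cardv; rewrite /deg -(card_imset _ val_inj).
have := card_supsets_succ (val v); rewrite card_ord cardv => <-.
congr #|pred_of_set _|; apply/setP=> A; rewrite inE.
apply/imsetP/andP => [[w]|[/eqP cardA svA]].
  rewrite inE => adj_vw ->; have := badj_card_neq adj_vw.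
  by case: (card_Bvert w) => cardw; rewrite cardv cardw ?eqxx // -badjE.
have [w eA] := Bvert_of_card (or_intror cardA); subst A.
by exists w; rewrite // inE badjE.
Qed.

Lemma deg_card_succ v : #|val v| = k.+1 -> deg v = k.+1.
Proof.
move=> cardv; rewrite /deg -(card_imset _ val_inj) -(card_subsets_pred cardv).
congr #|pred_of_set _|; apply/setP=> A; rewrite inE.
apply/imsetP/andP => [[w]|[/eqP cardA sAv]].
  rewrite inE badjC => adj_wv ->; have := badj_card_neq adj_wv.
  by case: (card_Bvert w) => cardw; rewrite cardv cardw ?eqxx // -badjE.
have [w eA] := Bvert_of_card (or_introl cardA); subst A.
by exists w; rewrite // inE badjC badjE.
Qed.

Lemma exists_Bvert_card_k : k < n -> exists v : V, #|val v| = k.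
Proof.
move=> k_lt_n; have [|A _ cardA] := @exists_subset_card _ [set: 'I_n] k.
  by rewrite cardsT card_ord ltnW.
by have [v eA] := Bvert_of_card (or_introl cardA); exists v; rewrite -eA.
Qed.

Lemma Fsig_inj : 0 < k -> k < n -> injective (@Fsig n k).
Proof.
move=> k_gt0 k_lt_n s t eq_st; apply/permP=> x; apply/eqP; apply: contraT => neq_st.
have neq_x : x != s^-1 (t x) by apply: contra neq_st => /eqP e; rewrite {1}e permKV.
have [|A [xA yNA cardA]] := exists_card_mem_notin (m := k) neq_x; first by rewrite card_ord k_gt0.
have [v eA] := Bvert_of_card (or_introl cardA).
have : t x \in s @: A by rewrite eA -FsigE eq_st FsigE -eA imset_f.
by rewrite -{1}(permKV s (t x)) mem_imset ?(negbTE yNA) //; apply: perm_inj.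
Qed.

Section Connected.
Variable P : V -> bool.
Hypothesis P_badj : forall v w, badj v w -> P v = P w.

Lemma badj_invariant_level_k d u w : #|val u| = k -> #|val w| = k ->
  #|val u :\: val w| = d -> P u = P w.
Proof.
elim: d u w => [|d IH] u w cardu cardw cardD.
  have suw : val u \subset val w by rewrite -setD_eq0 -cards_eq0 cardD.
  have /eqP/val_inj -> // : val u == val w by rewrite eqEcard suw cardu cardw leqnn.
have /card_gt0P[x] : 0 < #|val u :\: val w| by rewrite cardD.
rewrite inE => /andP[xNw xu].
have /card_gt0P[y] : 0 < #|val w :\: val u| by move: cardD; rewrite !cardsD setIC cardu cardw; lia.
rewrite inE => /andP[yNu yw].
have cardyu : #|y |: val u| = k.+1 by rewrite cardsU1 yNu cardu.
have [mid emid] := Bvert_of_card (or_intror cardyu).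
have cardyux : #|(y |: val u) :\ x| = k.
  by move: (cardsD1 x (y |: val u)); rewrite cardyu !inE xu orbT add1n => -[].
have [u' eu'] := Bvert_of_card (or_introl cardyux).
have Pu : P u = P mid by apply: P_badj; rewrite badjE -?emid ?subsetUr.
have Pu' : P u' = P mid by apply: P_badj; rewrite badjE -?emid -?eu' ?subD1set.
rewrite Pu -Pu'; apply: IH; rewrite -?eu' //.
have -> : (y |: val u) :\ x :\: val w = (val u :\: val w) :\ x.
  apply/setP=> z; rewrite !inE; case: (eqVneq z y) => [->|_]; first by rewrite yw !andbF.
  by case: (z \in val w); case: (z == x).
by move: (cardsD1 x (val u :\: val w)); rewrite cardD !inE xNw xu add1n => -[].
Qed.

Lemma badj_invariant_const : 0 < k -> forall v w, P v = P w.
Proof.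
move=> k_gt0.
have down v : exists2 u : V, #|val u| = k & P u = P v.
  case: (card_Bvert v) => cardv; first by exists v.
  have /card_gt0P[x xv] : 0 < #|val v| by rewrite cardv.
  have cardvx : #|val v :\ x| = k by move: (cardsD1 x (val v)); rewrite xv cardv add1n => -[].
  have [u eu] := Bvert_of_card (or_introl cardvx).
  by exists u; rewrite -?eu //; apply: P_badj; rewrite badjE -?eu ?subD1set.
move=> v w; have [u cardu <-] := down v; have [u' cardu' <-] := down w.
exact: badj_invariant_level_k.
Qed.

End Connected.

Lemma Baut_card_preserved p : n != k.*2.+1 -> p \in Baut n k ->
  forall v, #|val (p v)| = #|val v|.
Proof.
move=> n_neq p_aut v; have := deg_Baut v p_aut.
case: (card_Bvert v) => cardv; case: (card_Bvert (p v)) => cardpv;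
  rewrite ?(deg_card_k cardv) ?(deg_card_k cardpv) ?(deg_card_succ cardv)
    ?(deg_card_succ cardpv) ?cardv ?cardpv //; move/eqP: n_neq; lia.
Qed.

Lemma Baut_card_dichotomy p : 0 < k -> p \in Baut n k ->
  (forall v, #|val (p v)| = #|val v|) \/ (forall v, #|val (p v)| != #|val v|).
Proof.
move=> k_gt0 p_aut; pose P v := #|val (p v)| == #|val v|.
have P_badj v w : badj v w -> P v = P w.
  move=> adj_vw; have /badj_card_neq : badj (p v) (p w) by move/BautP: p_aut => ->.
  move: (badj_card_neq adj_vw); rewrite /P.
  by case: (card_Bvert v) (card_Bvert w) (card_Bvert (p v)) (card_Bvert (p w))
    => -> [] -> [] -> [] ->; lia.
case: (pickP P) => [v0 Pv0|noP]; [left|right] => v.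
  by apply/eqP; rewrite -/(P v) (badj_invariant_const P_badj k_gt0 v v0).
by rewrite -/(P v) noP.
Qed.

Lemma Baut_Fsig : k < n -> n != k.*2.+1 -> Baut n k = [set Fsig k s | s : {perm 'I_n}].
Proof.
move=> k_lt_n n_neq; apply/setP=> p; apply/idP/imsetP => [p_aut|[s _ ->]]; last first.
  exact: Fsig_Baut.
have [s ->] := card_preserving_Baut_Fsig k_lt_n p_aut (Baut_card_preserved n_neq p_aut).
by exists s.
Qed.

Lemma Fsig_isog : 0 < k -> k < n -> [set Fsig k s | s : {perm 'I_n}] \isog [set: {perm 'I_n}].
Proof.
move=> k_gt0 k_lt_n.
pose f := @Morphism _ _ [set: {perm 'I_n}] (@Fsig n k) (in2W FsigM).
have -> : [set Fsig k s | s : {perm 'I_n}] = f @* [set: {perm 'I_n}].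
  by rewrite morphimEdom; apply/setP=> p; apply/imsetP/imsetP => -[s _ ->]; exists s.
by rewrite isog_sym sub_isog //; apply/injmP=> s t _ _; apply: Fsig_inj.
Qed.

Section OddOrder.
Hypothesis n_odd : n = k.*2.+1.

Lemma card_Balpha v : #|val (Balpha n k v)| = n - #|val v|.
Proof. by rewrite BalphaE // cardsCs setCK card_ord. Qed.

Lemma Balpha_Baut : Balpha n k \in Baut n k.
Proof. by apply/BautP=> v w; rewrite /badj !BalphaE // !properC orbC. Qed.

Lemma Balpha_sqr : Balpha n k ^+ 2 = 1.
Proof. by apply/permP=> v; apply: val_inj; rewrite expgS expg1 permM perm1 !BalphaE // setCK. Qed.

Lemma Fsig_Balpha_commute (s : {perm 'I_n}) : commute (Fsig k s) (Balpha n k).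
Proof.
by apply/permP=> v; apply: val_inj; rewrite !permM !FsigE !BalphaE // FsigE imset_permC.
Qed.

Lemma Baut_Balpha_Fsig : 0 < k ->
  Baut n k = [set Balpha n k ^+ nat_of_bool b * Fsig k s | s : {perm 'I_n}, b : bool].
Proof.
move=> k_gt0; have k_lt_n : k < n by rewrite n_odd; lia.
apply/setP=> p; apply/idP/imset2P => [p_aut|[s b _ _ ->]]; last first.
  by apply: BautM (Fsig_Baut s); case: b; rewrite ?expg1 ?Balpha_Baut ?Baut1.
case: (Baut_card_dichotomy k_gt0 p_aut) => [p_card|p_swap].
  have [s ->] := card_preserving_Baut_Fsig k_lt_n p_aut p_card.
  by exists s false; rewrite ?mul1g.
have ap_card v : #|val ((Balpha n k * p) v)| = #|val v|.
  rewrite permM; move: (p_swap (Balpha n k v)); rewrite card_Balpha.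
  by case: (card_Bvert v) (card_Bvert (p (Balpha n k v))) => -> [] ->; lia.
have [s eq_s] := card_preserving_Baut_Fsig k_lt_n (BautM Balpha_Baut p_aut) ap_card.
exists s true => //; have := Balpha_sqr; rewrite expgS expg1 -eq_s mulgA => ->.
by rewrite mul1g.
Qed.

Lemma Balpha_Fsig_isog : 0 < k ->
  [set Balpha n k ^+ nat_of_bool b * Fsig k s | s : {perm 'I_n}, b : bool]
    \isog [set: {perm 'I_n} * 'Z_2].
Proof.
move=> k_gt0; have k_lt_n : k < n by rewrite n_odd; lia.
pose h (x : {perm 'I_n} * 'Z_2) := Balpha n k ^+ x.2 * Fsig k x.1.
have hM : {morph h : x y / x * y}.
  move=> [s1 b1] [s2 b2]; rewrite /h /= FsigM.
  rewrite expg_mod ?Balpha_sqr // expgD -!mulgA; congr (_ * _).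
  by rewrite !mulgA (commuteX b2 (Fsig_Balpha_commute s1)).
pose f := @Morphism _ _ [set: {perm 'I_n} * 'Z_2] h (in2W hM).
have -> : [set Balpha n k ^+ nat_of_bool b * Fsig k s | s : {perm 'I_n}, b : bool]
    = f @* [set: {perm 'I_n} * 'Z_2].
  rewrite morphimEdom; apply/setP=> p; apply/imset2P/imsetP => [[s b _ _ ->]|[[s b] _ ->]].
    by exists (s, inord b); rewrite // /f /= /h /= inordK //; case: b.
  by exists s (val b == 1%N) => //; rewrite /f /= /h /=; case: b => -[|[|]].
rewrite isog_sym sub_isog //; apply/injmP=> -[s1 b1] [s2 b2] _ _ /= eq_h.
have [v0 cardv0] := exists_Bvert_card_k k_lt_n.
have card_h s (b : 'Z_2) : #|val (h (s, b) v0)| = if b == 0 :> nat then k else k.+1.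
  rewrite /h permM FsigE card_imset; last exact: perm_inj.
  by case: b => -[|[|//]] ? /=; rewrite ?expg0 ?perm1 ?expg1 ?card_Balpha cardv0 //; lia.
have eq_b : b1 = b2.
  apply: ord_inj; have := congr1 (fun q : {perm V} => #|val (q v0)|) eq_h.
  rewrite /= !card_h; move: (ltn_ord b1) (ltn_ord b2).
  by case: (nat_of_ord b1) (nat_of_ord b2) => [|[|]] [|[|]] //=; lia.
by subst b2; move: eq_h; rewrite /f /= /h /= => /mulgI /(Fsig_inj k_gt0 k_lt_n) ->.
Qed.

End OddOrder.

End LevelGraph.

Theorem theorem3p10 (n k : nat) (hn : 4 <= n) (hk1 : 1 <= k) (hk2 : k.*2 < n) :
  (n != k.*2.+1 ->
     Baut n k = [set Fsig k s | s : {perm 'I_n}]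
     /\ Baut n k \isog [set: {perm 'I_n}]) /\
  (n = k.*2.+1 ->
     Baut n k = [set (Balpha n k ^+ (nat_of_bool b) * Fsig k s)%g | s : {perm 'I_n}, b : bool]
     /\ Baut n k \isog [set: ({perm 'I_n} * 'Z_2)%type]).
Proof.
have k_lt_n : k < n by lia.
split=> [n_neq | n_odd].
  by rewrite Baut_Fsig //; split=> //; apply: Fsig_isog.
by rewrite Baut_Balpha_Fsig //; split=> //; apply: Balpha_Fsig_isog.
Qed.
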